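(* Let $(\varphi_n)_{n\ge0}$ be vectors in $\mathbb{R}^d$, $r_0=1$, $r_n=1+\sum_{i=1}^n\|\varphi_i\|^2$, $A_n=\varphi_n\varphi_n^\top/r_n$, and define $\Phi(i,i)=I$, $\Phi(n+1,i)=(I-A_n)\Phi(n,i)$ for $n\ge i$. Assume $r_n\to\infty$, $r_n=O(r_{n-1})$, and that for some $\alpha<1$ $$\kappa\Big(\sum_{i=1}^n\varphi_i\varphi_i^\top\Big)=O\big((\log r_n)^\alpha\big),$$ i.e. there exist $M>0$ and $n_0$ such that for all $n\ge n_0$ the matrix $\sum_{i=1}^n\varphi_i\varphi_i^\top$ is nonsingular with condition number at most $M(\log r_n)^\alpha$. Then $\Phi(n,0)\to0$ as $n\to\infty$.
   Context: For a nonsingular matrix $A$, $\kappa(A)=\|A\|\,\|A^{-1}\|$ with $\|\cdot\|$ the spectral norm; $\log$ is the natural logarithm; $r_n=O(r_{n-1})$ means $r_n\le Cr_{n-1}$ for some constant $C$ and all $n\ge1$. *)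

From HB Require Import structures.
From mathcomp Require Import all_boot all_order all_algebra.
From mathcomp Require Import all_classical all_reals all_analysis.
Set Implicit Arguments. Unset Strict Implicit. Unset Printing Implicit Defensive.
Import Order.TTheory GRing.Theory Num.Theory.
Import numFieldNormedType.Exports.
Local Open Scope ring_scope.
Local Open Scope classical_set_scope.

Definition enorm (R : realType) (d : nat) (v : 'cV[R]_d) : R :=
  Num.sqrt (\sum_(k < d) v k ord0 ^+ 2).

Definition specnorm (R : realType) (m n : nat) (A : 'M[R]_(m, n)) : R :=
  sup [set enorm (A *m v) | v in [set v : 'cV[R]_n | enorm v = 1]].

Definition cond (R : realType) (d : nat) (A : 'M[R]_d) : R :=
  specnorm A * specnorm (invmx A).

Definition rseq (R : realType) (d : nat) (phi : nat -> 'cV[R]_d) (n : nat) : R :=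
  1 + \sum_(1 <= i < n.+1) enorm (phi i) ^+ 2.

Definition Amat (R : realType) (d : nat) (phi : nat -> 'cV[R]_d) (n : nat)
  : 'M[R]_d := (rseq phi n)^-1 *: (phi n *m (phi n)^T).

(* transition from time i over k steps: Phi(i+k, i) *)
Fixpoint trans (R : realType) (d : nat) (phi : nat -> 'cV[R]_d) (i k : nat)
  : 'M[R]_d :=
  match k with
  | 0 => 1%:M
  | k'.+1 => (1%:M - Amat phi (i + k')) *m trans phi i k'
  end.

Definition Phi (R : realType) (d : nat) (phi : nat -> 'cV[R]_d) (n i : nat)
  : 'M[R]_d := trans phi i (n - i).

Definition Smat (R : realType) (d : nat) (phi : nat -> 'cV[R]_d) (n : nat)
  : 'M[R]_d := \sum_(1 <= i < n.+1) (phi i *m (phi i)^T).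

From HB Require Import structures.
From mathcomp Require Import all_boot all_order all_algebra.
From mathcomp Require Import all_classical all_reals all_analysis.
From mathcomp Require Import ring lra.
Set Implicit Arguments. Unset Strict Implicit. Unset Printing Implicit Defensive.
Import Order.TTheory GRing.Theory Num.Theory.
Import numFieldNormedType.Exports.
Local Open Scope ring_scope.
Local Open Scope classical_set_scope.

(* Write x_n = Phi(n, 0) x_0 and V_n = |x_n|^2.  From n = 1 on, each step
   decreases V by at least the dissipation a_n^2 / r_n, a_n = phi_n . x_n.
   The condition number bound makes S_n persistently exciting:
   |S_n| |x|^2 <= kappa(S_n) sum_(i <= n) (phi_i . x)^2, and d |S_n| >= r_n - 1.
   On a block [m, n] along which r grows by a large factor K, applied to
   x = x_(m+1) this gives V_(m+1) <= 8 d kappa(S_n) (1 + log K) D, where D is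
   the dissipation on the block: before m the regressors carry a negligible
   part of r_n, and after m the trajectory moves little.  If V stayed above
   eps, then N blocks with growth factor K = e^t would dissipate N eps / G,
   with G of order kappa log K; since kappa <= M (log r)^alpha with alpha < 1
   is at most polynomial in N t, this exceeds V_1 for suitable large t, N.
   Taking x_0 = e_j gives the columns of Phi(n, 0). *)

Section CauchySchwarz.
Variable R : realType.

Lemma cauchy_schwarz_sum (I : Type) (s : seq I) (u v : I -> R) :
  (\sum_(i <- s) u i * v i) ^+ 2 <=
  (\sum_(i <- s) u i ^+ 2) * (\sum_(i <- s) v i ^+ 2).
Proof.
set A := \sum_(i <- s) u i ^+ 2; set B := \sum_(i <- s) u i * v i.
set C := \sum_(i <- s) v i ^+ 2.
have lagrange : \sum_(i <- s) \sum_(j <- s) (u i * v j - u j * v i) ^+ 2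
                = 2 * (A * C - B ^+ 2).
  have expand i j : (u i * v j - u j * v i) ^+ 2 =
      u i ^+ 2 * v j ^+ 2 + u j ^+ 2 * v i ^+ 2 - 2 * (u i * v i * (u j * v j)).
    by ring.
  under eq_bigr => i _ do under eq_bigr => j _ do rewrite expand.
  under eq_bigr => i _ do rewrite sumrB big_split /=.
  rewrite sumrB big_split /=.
  have AC : \sum_(i <- s) \sum_(j <- s) u i ^+ 2 * v j ^+ 2 = A * C.
    by rewrite /A mulr_suml; apply: eq_bigr => i _; rewrite mulr_sumr.
  have CA : \sum_(i <- s) \sum_(j <- s) u j ^+ 2 * v i ^+ 2 = A * C.
    by rewrite exchange_big.
  have BB : \sum_(i <- s) \sum_(j <- s) 2 * (u i * v i * (u j * v j))
            = 2 * B ^+ 2.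
    rewrite expr2 /B mulr_suml mulr_sumr; apply: eq_bigr => i _.
    by rewrite !mulr_sumr; apply: eq_bigr => j _; ring.
  by rewrite AC CA BB; ring.
have : 0 <= \sum_(i <- s) \sum_(j <- s) (u i * v j - u j * v i) ^+ 2.
  by apply: sumr_ge0 => i _; apply: sumr_ge0 => j _; exact: sqr_ge0.
by rewrite lagrange; lra.
Qed.

End CauchySchwarz.

Section EuclideanStructure.
Variables (R : realType) (d : nat).
Implicit Types u v w : 'cV[R]_d.

Definition dot u v : R := \sum_(k < d) u k ord0 * v k ord0.

Lemma dotC u v : dot u v = dot v u.
Proof. by apply: eq_bigr => k _; rewrite mulrC. Qed.

Lemma dotDr u v w : dot u (v + w) = dot u v + dot u w.
Proof. by rewrite /dot -big_split; apply: eq_bigr => k _; rewrite mxE mulrDr. Qed.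

Lemma dotNr u v : dot u (- v) = - dot u v.
Proof. by rewrite /dot -sumrN; apply: eq_bigr => k _; rewrite mxE mulrN. Qed.

Lemma dotBr u v w : dot u (v - w) = dot u v - dot u w.
Proof. by rewrite dotDr dotNr. Qed.

Lemma dotZr u v c : dot u (c *: v) = c * dot u v.
Proof. by rewrite /dot mulr_sumr; apply: eq_bigr => k _; rewrite mxE mulrCA. Qed.

Lemma dotDl u v w : dot (v + w) u = dot v u + dot w u.
Proof. by rewrite dotC dotDr !(dotC u). Qed.

Lemma dotBl u v w : dot (v - w) u = dot v u - dot w u.
Proof. by rewrite dotC dotBr !(dotC u). Qed.

Lemma dotNl u v : dot (- v) u = - dot v u.
Proof. by rewrite dotC dotNr dotC. Qed.

Lemma dotZl u v c : dot (c *: v) u = c * dot v u.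
Proof. by rewrite dotC dotZr dotC. Qed.

Lemma dot0r u : dot u 0 = 0.
Proof. by rewrite /dot big1 // => k _; rewrite mxE mulr0. Qed.

Lemma dot_ge0 u : 0 <= dot u u.
Proof. by apply: sumr_ge0 => k _; rewrite -expr2 sqr_ge0. Qed.

Lemma dot_eq0 u : (dot u u == 0) = (u == 0).
Proof.
apply/idP/eqP => [|->]; last by rewrite dot0r.
rewrite psumr_eq0 => [/allP u0|k _]; last by rewrite -expr2 sqr_ge0.
apply/matrixP => k j; rewrite mxE (ord1 j).
by have /(_ (mem_index_enum k)) := u0 k; rewrite mulf_eq0 orbb => /eqP.
Qed.

Lemma enorm_sqr u : enorm u ^+ 2 = dot u u.
Proof.
rewrite /enorm sqr_sqrtr; last by apply: sumr_ge0 => k _; exact: sqr_ge0.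
by apply: eq_bigr => k _; rewrite expr2.
Qed.

Lemma enorm_ge0 u : 0 <= enorm u.
Proof. exact: sqrtr_ge0. Qed.

Lemma enormE u : enorm u = Num.sqrt (dot u u).
Proof. by rewrite -enorm_sqr sqrtr_sqr ger0_norm // enorm_ge0. Qed.

Lemma enorm0 : enorm (0 : 'cV[R]_d) = 0.
Proof. by rewrite enormE dot0r sqrtr0. Qed.

Lemma enorm_eq0 u : (enorm u == 0) = (u == 0).
Proof. by rewrite enormE sqrtr_eq0 le_eqVlt ltNge dot_ge0 orbF dot_eq0. Qed.

Lemma enormZ u c : enorm (c *: u) = `|c| * enorm u.
Proof. by rewrite !enormE dotZl dotZr mulrA sqrtrM ?sqr_ge0 // sqrtr_sqr. Qed.

Lemma enormN u : enorm (- u) = enorm u.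
Proof. by rewrite !enormE dotNl dotNr opprK. Qed.

Lemma cauchy_schwarz_dot u v : dot u v ^+ 2 <= dot u u * dot v v.
Proof.
have := cauchy_schwarz_sum (index_enum 'I_d)
  (fun k => u k ord0) (fun k => v k ord0).
by congr (_ <= _ * _); apply: eq_bigr => k _; rewrite expr2.
Qed.

Lemma normr_dot_le u v : `|dot u v| <= enorm u * enorm v.
Proof.
rewrite -ler_sqr ?nnegrE ?mulr_ge0 ?enorm_ge0 // real_normK ?num_real //.
by rewrite exprMn !enorm_sqr cauchy_schwarz_dot.
Qed.

Lemma dot_le u v : dot u v <= enorm u * enorm v.
Proof. exact: le_trans (ler_norm _) (normr_dot_le u v). Qed.

Lemma enormD u v : enorm (u + v) <= enorm u + enorm v.
Proof.
rewrite -ler_sqr ?nnegrE ?addr_ge0 ?enorm_ge0 //.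
rewrite enorm_sqr dotDl !dotDr sqrrD !enorm_sqr (dotC v u).
by have := dot_le u v; lra.
Qed.

Lemma mulmx_rank1 (p y : 'cV[R]_d) : (p *m p^T) *m y = dot p y *: p.
Proof.
apply/matrixP => i j; rewrite (ord1 j) !mxE.
under eq_bigr => k _ do rewrite mxE big_ord1 !mxE.
by rewrite /dot mulr_suml; apply: eq_bigr => k _; ring.
Qed.

Lemma dot_delta (k : 'I_d) u : dot (delta_mx k ord0) u = u k ord0.
Proof.
rewrite /dot (bigD1 k) //= mxE !eqxx mul1r big1 ?addr0 // => j jk.
by rewrite mxE (negbTE jk) mul0r.
Qed.

Lemma enorm_delta (k : 'I_d) : enorm (delta_mx k ord0 : 'cV[R]_d) = 1.
Proof. by rewrite enormE dot_delta mxE !eqxx sqrtr1. Qed.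

End EuclideanStructure.

Section SpectralNorm.
Variables (R : realType) (m n : nat).
Implicit Types (A : 'M[R]_(m, n)) (v : 'cV[R]_n).

Lemma enorm_mulmx_le_frobenius A v :
  enorm (A *m v) <= Num.sqrt (\sum_i \sum_j A i j ^+ 2) * enorm v.
Proof.
rewrite !enormE -sqrtrM; last first.
  by apply: sumr_ge0 => i _; apply: sumr_ge0 => j _; exact: sqr_ge0.
apply: ler_wsqrtr; rewrite /dot mulr_suml; apply: ler_sum => i _.
rewrite mxE -expr2; apply: le_trans (cauchy_schwarz_sum _ _ _) _.
apply: ler_wpM2l; first by apply: sumr_ge0 => j _; exact: sqr_ge0.
by under [X in _ <= X]eq_bigr => j _ do rewrite -expr2.
Qed.

Lemma specnorm_has_ubound A :
  has_ubound [set enorm (A *m v) | v in [set v | enorm v = 1]].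
Proof.
exists (Num.sqrt (\sum_i \sum_j A i j ^+ 2)) => _ [v /= v1 <-].
by have := enorm_mulmx_le_frobenius A v; rewrite v1 mulr1.
Qed.

Lemma specnorm_le A v : enorm (A *m v) <= specnorm A * enorm v.
Proof.
have [->|v0] := eqVneq v 0; first by rewrite mulmx0 !enorm0 mulr0.
have vpos : 0 < enorm v by rewrite lt_neqAle eq_sym enorm_eq0 v0 enorm_ge0.
have unit_v : enorm ((enorm v)^-1 *: v) = 1.
  by rewrite enormZ ger0_norm ?invr_ge0 ?enorm_ge0 // mulVf ?gt_eqF.
have := ub_le_sup (specnorm_has_ubound A) (ex_intro2 _ _ _ unit_v erefl).
rewrite -scalemxAr enormZ ger0_norm ?invr_ge0 ?enorm_ge0 //.
by rewrite ler_pdivrMl // mulrC.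
Qed.

Lemma specnorm_ge0 A : 0 <= specnorm A.
Proof.
rewrite /specnorm; set S := [set _ | _ in _].
have [S0|/set0P [_ [v v1 _]]] := eqVneq S set0; first by rewrite S0 sup0.
apply: le_trans (enorm_ge0 _) (ub_le_sup (specnorm_has_ubound A) _).
by exists v.
Qed.

End SpectralNorm.

Lemma cond_ge0 (R : realType) (d : nat) (A : 'M[R]_d) : 0 <= cond A.
Proof. by rewrite mulr_ge0 ?specnorm_ge0. Qed.

Section Regressors.
Variables (R : realType) (d : nat) (phi : nat -> 'cV[R]_d).
Local Notation r := (rseq phi).

Lemma rseqS n : r n.+1 = r n + dot (phi n.+1) (phi n.+1).
Proof. by rewrite /rseq big_nat_recr //= enorm_sqr addrA. Qed.

Lemma rseq0 : r 0 = 1.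
Proof. by rewrite /rseq big_geq // addr0. Qed.

Lemma rseq_ge1 n : 1 <= r n.
Proof. by rewrite /rseq lerDl; apply: sumr_ge0 => i _; exact: sqr_ge0. Qed.

Lemma rseq_gt0 n : 0 < r n.
Proof. exact: lt_le_trans ltr01 (rseq_ge1 n). Qed.

Lemma rseq_le m n : (m <= n)%N -> r m <= r n.
Proof.
move/subnK <-; elim: (n - m)%N => [|k IH]; first by rewrite add0n.
by rewrite addSn rseqS; apply: le_trans IH _; rewrite lerDl dot_ge0.
Qed.

Lemma rseq_subr1 n : r n - 1 = \sum_(1 <= i < n.+1) dot (phi i) (phi i).
Proof.
by rewrite /rseq addrC addKr; apply: eq_bigr => i _; rewrite enorm_sqr.
Qed.

Lemma rel_incr_le_ln n :
  dot (phi n.+1) (phi n.+1) / r n.+1 <= ln (r n.+1) - ln (r n).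
Proof.
have r_gt0 := rseq_gt0 n; have rS_gt0 := rseq_gt0 n.+1.
have ratioE : r n / r n.+1 = 1 + - (dot (phi n.+1) (phi n.+1) / r n.+1).
  by rewrite rseqS; field; rewrite gt_eqF // -rseqS.
have ratio_gt : -1 < - (dot (phi n.+1) (phi n.+1) / r n.+1).
  by rewrite ltrN2 ltr_pdivrMr // mul1r rseqS ltrDr rseq_gt0.
by have := le_ln1Dx ratio_gt; rewrite -ratioE ln_div ?posrE //; lra.
Qed.

Definition excitation m n (x : 'cV[R]_d) : R :=
  \sum_(m <= i < n) dot (phi i) x ^+ 2.

Lemma excitation_ge0 m n x : 0 <= excitation m n x.
Proof. by apply: sumr_ge0 => i _; exact: sqr_ge0. Qed.

Lemma excitation_le k x : excitation 1 k.+1 x <= (r k - 1) * dot x x.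
Proof.
by rewrite rseq_subr1 mulr_suml; apply: ler_sum => i _; exact: cauchy_schwarz_dot.
Qed.

Lemma dot_Smat n u v :
  dot u (Smat phi n *m v) = \sum_(1 <= i < n.+1) dot (phi i) u * dot (phi i) v.
Proof.
rewrite /Smat; elim/big_rec2: _ => [|i a S _ <-]; first by rewrite mul0mx dot0r.
by rewrite mulmxDl dotDr mulmx_rank1 dotZr mulrC dotC.
Qed.

Lemma specnorm_Smat_ge n : r n - 1 <= d%:R * specnorm (Smat phi n).
Proof.
have diag (k : 'I_d) :
    \sum_(1 <= i < n.+1) phi i k ord0 ^+ 2 <= specnorm (Smat phi n).
  have := specnorm_le (Smat phi n) (delta_mx k ord0).
  rewrite enorm_delta mulr1; apply: le_trans.
  have := dot_le (delta_mx k ord0) (Smat phi n *m delta_mx k ord0).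
  rewrite enorm_delta mul1r; apply: le_trans.
  rewrite dot_Smat.
  by under [X in _ <= X]eq_bigr => i _ do rewrite (dotC (phi i)) dot_delta -expr2.
rewrite rseq_subr1.
have -> : \sum_(1 <= i < n.+1) dot (phi i) (phi i)
          = \sum_(k < d) \sum_(1 <= i < n.+1) phi i k ord0 ^+ 2.
  rewrite exchange_big /=; apply: eq_bigr => i _.
  by apply: eq_bigr => k _; rewrite expr2.
rewrite -[d in d%:R]card_ord -sumr_const mulr_suml.
by apply: ler_sum => k _; rewrite mul1r diag.
Qed.

(* With y = S^-1 x, Cauchy-Schwarz for the quadratic form of S gives
   (x.x)^2 <= E(x) E(y), where E is the excitation, and
   E(y) = y.x <= |S^-1| x.x. *)
Lemma excitation_Smat_ge n x : Smat phi n \in unitmx ->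
  specnorm (Smat phi n) * dot x x <= cond (Smat phi n) * excitation 1 n.+1 x.
Proof.
move=> S_unit; set S := Smat phi n.
have [->|x0] := eqVneq x 0.
  rewrite dot0r mulr0 /excitation big1 ?mulr0 // => i _.
  by rewrite dot0r expr2 mulr0.
have xx_gt0 : 0 < dot x x by rewrite lt_neqAle eq_sym dot_eq0 x0 dot_ge0.
set y := invmx S *m x.
have Sy : S *m y = x by rewrite mulKVmx.
have Qy : excitation 1 n.+1 y = dot y x.
  by rewrite -Sy dot_Smat; apply: eq_bigr => i _; rewrite expr2.
have xx2 : dot x x ^+ 2 <= excitation 1 n.+1 x * excitation 1 n.+1 y.
  by rewrite -{2}Sy dot_Smat; exact: cauchy_schwarz_sum.
have yx : dot y x <= specnorm (invmx S) * dot x x.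
  apply: le_trans (dot_le y x) _.
  by rewrite -enorm_sqr expr2 mulrA ler_wpM2r ?enorm_ge0 // specnorm_le.
have xx : dot x x <= specnorm (invmx S) * excitation 1 n.+1 x.
  rewrite -(ler_pM2r xx_gt0) -expr2 mulrAC; apply: le_trans xx2 _.
  by rewrite Qy mulrC ler_wpM2r ?excitation_ge0.
by rewrite /cond -mulrA ler_wpM2l ?specnorm_ge0.
Qed.

End Regressors.

Lemma ler_sum_nat_sub (R : numDomainType) (f : nat -> R) a b c e :
  (forall j, 0 <= f j) -> (a <= b)%N -> (b <= c)%N -> (c <= e)%N ->
  \sum_(b <= j < c) f j <= \sum_(a <= j < e) f j.
Proof.
move=> f_ge0 ab bc ce.
rewrite (@big_cat_nat _ _ _ b a e) ?(leq_trans bc) //.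
rewrite (@big_cat_nat _ _ _ c b e) //=.
by rewrite addrCA lerDl addr_ge0 ?sumr_ge0.
Qed.

Section Trajectory.
Variables (R : realType) (d : nat) (phi : nat -> 'cV[R]_d) (x0 : 'cV[R]_d).
Local Notation r := (rseq phi).
Local Notation p j := (dot (phi j) (phi j)).

Definition traj n := trans phi 0 n *m x0.

Definition lyap n := dot (traj n) (traj n).

Definition innov n := dot (phi n) (traj n).

Definition dissipation m n := \sum_(m <= j < n) innov j ^+ 2 / r j.

Definition rel_growth m n := \sum_(m <= j < n) p j / r j.

Lemma trajS n : traj n.+1 = traj n - (innov n / r n) *: phi n.
Proof.
rewrite /traj /= add0n -mulmxA mulmxBl mul1mx; congr (_ - _).
by rewrite /Amat -!scalemxAl mulmx_rank1 scalerA mulrC.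
Qed.

Lemma lyap_ge0 n : 0 <= lyap n.
Proof. exact: dot_ge0. Qed.

Lemma dissipation_ge0 m n : 0 <= dissipation m n.
Proof. by apply: sumr_ge0 => j _; rewrite divr_ge0 ?sqr_ge0 ?ltW ?rseq_gt0. Qed.

Lemma rel_growth_ge0 m n : 0 <= rel_growth m n.
Proof. by apply: sumr_ge0 => j _; rewrite divr_ge0 ?dot_ge0 ?ltW ?rseq_gt0. Qed.

(* From step 1 on, p n <= r n, so the normalised step is a contraction. *)
Lemma lyapS_le n : (1 <= n)%N -> lyap n.+1 <= lyap n - innov n ^+ 2 / r n.
Proof.
case: n => // n _; set c := innov n.+1 / r n.+1.
have rpos := rseq_gt0 phi n.+1.
have innovE : innov n.+1 = c * r n.+1 by rewrite mulfVK ?gt_eqF.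
have p_le : p n.+1 <= r n.+1 by rewrite rseqS; have := rseq_ge1 phi n; lra.
have dissE : innov n.+1 ^+ 2 / r n.+1 = c ^+ 2 * r n.+1.
  by rewrite innovE; field; rewrite gt_eqF.
rewrite /lyap trajS dotBl !dotBr !dotZl !dotZr (dotC (traj _)) -/(innov _).
rewrite -/c dissE innovE; have := ler_wpM2l (sqr_ge0 c) p_le; lra.
Qed.

Lemma lyap_dissipation m n : (1 <= m <= n)%N ->
  lyap n + dissipation m n <= lyap m.
Proof.
case/andP=> m1 /subnK <-; elim: (n - m)%N => [|k IH].
  by rewrite add0n /dissipation big_geq // addr0.
rewrite addSn /dissipation big_nat_recr /= ?leq_addl //.
have := lyapS_le (leq_trans m1 (leq_addl k m)); move: IH; rewrite /dissipation.
lra.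
Qed.

Lemma lyap_le m n : (1 <= m <= n)%N -> lyap n <= lyap m.
Proof.
move/lyap_dissipation; have := dissipation_ge0 m n; lra.
Qed.

Lemma traj_dist m n : (m <= n)%N ->
  enorm (traj n - traj m) <= \sum_(m <= j < n) `|innov j / r j| * enorm (phi j).
Proof.
move/subnK <-; elim: (n - m)%N => [|k IH].
  by rewrite add0n subrr enorm0 big_geq.
rewrite addSn big_nat_recr ?leq_addl //= trajS addrAC.
apply: le_trans (enormD _ _) _.
by rewrite enormN enormZ lerD2r.
Qed.

Lemma traj_dist_sqr m i n : (m <= i <= n)%N ->
  dot (traj i - traj m) (traj i - traj m) <= dissipation m n * rel_growth m n.
Proof.
case/andP=> mi in_.
have sqrtK j : Num.sqrt (r j) ^+ 2 = r j by rewrite sqr_sqrtr // ltW ?rseq_gt0.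
have sqrt_gt0 j : 0 < Num.sqrt (r j) by rewrite sqrtr_gt0 rseq_gt0.
have cs : (\sum_(m <= j < i) `|innov j / r j| * enorm (phi j)) ^+ 2
          <= dissipation m i * rel_growth m i.
  have termE j : `|innov j / r j| * enorm (phi j)
      = `|innov j| / Num.sqrt (r j) * (enorm (phi j) / Num.sqrt (r j)).
    rewrite normrM (@ger0_norm _ (r j)^-1) ?invr_ge0 ?ltW ?rseq_gt0 //.
    by rewrite -[in LHS](sqrtK j); field; rewrite gt_eqF.
  have dissE :
      dissipation m i = \sum_(m <= j < i) (`|innov j| / Num.sqrt (r j)) ^+ 2.
    by apply: eq_bigr => j _; rewrite expr_div_n sqrtK real_normK ?num_real.
  have growthE :
      rel_growth m i = \sum_(m <= j < i) (enorm (phi j) / Num.sqrt (r j)) ^+ 2.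
    by apply: eq_bigr => j _; rewrite expr_div_n sqrtK enorm_sqr.
  rewrite (eq_bigr _ (fun j _ => termE j)) dissE growthE.
  exact: cauchy_schwarz_sum.
rewrite -enorm_sqr; apply: le_trans (le_trans _ cs) _.
  have sum_ge0 : 0 <= \sum_(m <= j < i) `|innov j / r j| * enorm (phi j).
    by apply: sumr_ge0 => j _; rewrite mulr_ge0 ?enorm_ge0.
  by rewrite ler_sqr ?nnegrE ?enorm_ge0 // traj_dist.
have widen (f : nat -> R) : (forall j, 0 <= f j) ->
    \sum_(m <= j < i) f j <= \sum_(m <= j < n) f j.
  by move=> f_ge0; exact: ler_sum_nat_sub f_ge0 (leqnn m) mi in_.
apply: ler_pM; rewrite ?dissipation_ge0 ?rel_growth_ge0 ?widen // => j.
  by rewrite divr_ge0 ?sqr_ge0 ?ltW ?rseq_gt0.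
by rewrite divr_ge0 ?dot_ge0 ?ltW ?rseq_gt0.
Qed.

Lemma excitation_block m n : (1 <= m <= n.+1)%N ->
  excitation phi m n.+1 (traj m)
  <= 2 * r n * dissipation m n.+1 * (1 + rel_growth m n.+1).
Proof.
case/andP=> m1 mn; set D := dissipation m n.+1; set L := rel_growth m n.+1.
have term i : (m <= i < n.+1)%N -> dot (phi i) (traj m) ^+ 2
    <= 2 * r n * (innov i ^+ 2 / r i) + 2 * (D * L) * p i.
  case/andP=> mi ilt.
  have -> : dot (phi i) (traj m) = innov i - dot (phi i) (traj i - traj m).
    by rewrite dotBr opprB addrC subrK.
  have T2 : dot (phi i) (traj i - traj m) ^+ 2 <= p i * (D * L).
    apply: le_trans (cauchy_schwarz_dot _ _) _.
    by rewrite ler_wpM2l ?dot_ge0 // traj_dist_sqr // mi ltnW.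
  have A2 : innov i ^+ 2 <= r n * (innov i ^+ 2 / r i).
    rewrite mulrC -{1}(mulfVK (lt0r_neq0 (rseq_gt0 phi i)) (innov i ^+ 2)).
    apply: ler_wpM2l; first by rewrite divr_ge0 ?sqr_ge0 ?ltW ?rseq_gt0.
    exact: rseq_le.
  move: T2 A2; set A := innov i; set T := dot _ _.
  by have := sqr_ge0 (A + T); nra.
rewrite /excitation; apply: le_trans (ler_sum_nat term) _.
rewrite big_split /= -!mulr_sumr -/(dissipation m n.+1) -/D.
have p_sum : \sum_(m <= i < n.+1) p i <= r n.
  have := ler_sum_nat_sub (fun j => dot_ge0 (phi j)) m1 mn (leqnn _).
  move/le_trans; apply.
  by rewrite -rseq_subr1 lerBlDr lerDl.
have DL_ge0 : 0 <= D * L by rewrite mulr_ge0 ?dissipation_ge0 ?rel_growth_ge0.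
have := ler_wpM2l DL_ge0 p_sum; lra.
Qed.

Lemma rel_growth_le_ln m n : (m <= n)%N ->
  rel_growth m.+1 n.+1 <= ln (r n) - ln (r m).
Proof.
move/subnK <-; elim: (n - m)%N => [|k IH].
  by rewrite add0n /rel_growth big_geq // subrr.
rewrite addSn /rel_growth big_nat_recr /= ?ltnS ?leq_addl //.
by have := rel_incr_le_ln phi (k + m); move: IH; rewrite /rel_growth; lra.
Qed.

Lemma dissipation_blocks_le (mk : nat -> nat) N :
  (forall k, (k < N)%N -> (mk k < mk k.+1)%N) ->
  \sum_(k < N) dissipation (mk k).+1 (mk k.+1).+1 <= lyap (mk 0).+1.
Proof.
move=> mk_incr.
suff : lyap (mk N).+1 + \sum_(k < N) dissipation (mk k).+1 (mk k.+1).+1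
       <= lyap (mk 0).+1 by have := lyap_ge0 (mk N).+1; lra.
elim: N mk_incr => [|N IH] mk_incr; first by rewrite big_ord0 addr0.
rewrite big_ord_recr /= addrA addrAC.
have step : (1 <= (mk N).+1 <= (mk N.+1).+1)%N by rewrite /= ltnS ltnW ?mk_incr.
have := lyap_dissipation step.
by have := IH (fun k kN => mk_incr k (ltnW kN)); lra.
Qed.

(* Excitation of x = traj m.+1 over [1, n]: the part before m.+1 is at most
   r m |x|^2, negligible by the hypothesis on r m; the part after it only sees
   the small drift of the trajectory, controlled by the dissipation. *)
Lemma lyap_le_dissipation m n : (1 <= m < n)%N -> Smat phi n \in unitmx ->
  2 <= r n -> 4 * d%:R * cond (Smat phi n) * r m <= r n ->
  lyap m.+1 <= 8 * d%:R * cond (Smat phi n) * (1 + (ln (r n) - ln (r m)))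
               * dissipation m.+1 n.+1.
Proof.
case/andP=> m1 mn S_unit r2 small_rm.
set k := cond (Smat phi n); set V := lyap m.+1; set D := dissipation m.+1 n.+1.
set lg := ln (r n) - ln (r m); set Q := excitation phi 1 n.+1 (traj m.+1).
have k_ge0 : 0 <= d%:R * k by rewrite mulr_ge0 ?cond_ge0.
have D_ge0 : 0 <= D := dissipation_ge0 _ _.
have V_ge0 : 0 <= V := lyap_ge0 _.
have rn_gt0 : 0 < r n by lra.
have Q_le : Q <= r m * V + 2 * r n * D * (1 + lg).
  have Q1 := excitation_le phi m (traj m.+1).
  have Q2 : excitation phi m.+1 n.+1 (traj m.+1)
            <= 2 * r n * D * (1 + rel_growth m.+1 n.+1).
    by apply: excitation_block; apply/andP; split => //; exact: ltnW.
  have L_le : 1 + rel_growth m.+1 n.+1 <= 1 + lg.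
    by rewrite lerD2l rel_growth_le_ln // ltnW.
  have twoD : 0 <= 2 * r n * D by rewrite !mulr_ge0 // ltW.
  have mn1 : (m < n.+1)%N by rewrite ltnS ltnW.
  rewrite /Q /excitation (@big_cat_nat _ _ _ m.+1) //=.
  rewrite -/(excitation _ 1 _ _) -/(excitation _ m.+1 _ _).
  have := ler_wpM2l twoD L_le; move: Q1 Q2; rewrite -/(lyap _) -/V; nra.
have Q_ge : (r n - 1) * V <= d%:R * k * Q.
  have := ler_wpM2r V_ge0 (specnorm_Smat_ge phi n).
  have := ler_wpM2l (ler0n R d) (excitation_Smat_ge (traj m.+1) S_unit).
  rewrite -/(lyap _) -/V -/k -/Q => h1 h2.
  by rewrite -mulrA in h2; rewrite -mulrA; exact: le_trans h2 h1.
have h3 := ler_wpM2l k_ge0 Q_le; have h4 := ler_wpM2r V_ge0 small_rm.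
have h5 : 0 <= (r n - 2) * V by rewrite mulr_ge0 // subr_ge0.
rewrite -(ler_pM2l rn_gt0).
move: Q_ge k_ge0 h3 h4 h5; rewrite -/k; move: (d%:R : R) => dd.
nra.
Qed.

End Trajectory.

Section Horizon.
Variable R : realType.

Lemma mul_exprn_le_expR (c t : R) (s : nat) :
  0 <= c -> 0 <= t -> (s.+1)`!%:R * c <= t -> c * t ^+ s <= expR t.
Proof.
move=> c0 t0 ct; apply: le_trans (expR_ge1Dxn s t0).
have fact_pos : (0 : R) < (s.+1)`!%:R by rewrite ltr0n fact_gt0.
have : c * t ^+ s <= t ^+ s.+1 / (s.+1)`!%:R.
  by rewrite ler_pdivlMr // exprS mulrAC (mulrC c) ler_wpM2r ?exprn_ge0.
by move/le_trans; apply; rewrite lerDr ler01.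
Qed.

Lemma powR_le_exprn (L t beta : R) (k s : nat) :
  0 <= beta -> 1 <= t -> 0 <= L -> L <= t ^+ k -> k%:R * beta <= s%:R ->
  L `^ beta <= t ^+ s.
Proof.
move=> beta0 t1 L0 Lt kbeta; have t0 : 0 <= t by lra.
have := @ge0_ler_powR _ beta beta0 L (t ^+ k); rewrite !nnegrE exprn_ge0 //.
move=> /(_ L0 isT Lt) /le_trans; apply.
by rewrite -!powR_mulrn // -powRrM ler_powR.
Qed.

(* Witnesses t = T and N = T^(s+2) for a large integer T, where
   (s+4) beta <= s: then L <= T^(s+4), hence L^beta <= T^s, and
   expR T >= T^(s+1) / (s+1)! dominates. *)
Lemma horizon_exists (d : nat) (M C a V1 eps beta : R) :
  0 < M -> 1 <= C -> 0 <= a -> 0 <= V1 -> 0 < eps -> 0 <= beta < 1 ->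
  exists (t : R) (N : nat), let L := a + N%:R * t in
  [/\ C <= expR t, 4 * d%:R * M * C * L `^ beta <= expR t
    & 8 * d%:R * M * L `^ beta * (1 + ln C + t) * V1 < N%:R * eps].
Proof.
move=> M0 C1 a0 V0 eps0 /andP[beta0 beta1].
have [s s_beta] : exists s : nat, s.+4%:R * beta <= s%:R.
  have b_ge0 : 0 <= 4 * beta / (1 - beta) by apply: divr_ge0; lra.
  exists (Num.Def.archi_bound (4 * beta / (1 - beta))).
  move: (archi_boundP b_ge0); rewrite ltr_pdivrMr ?subr_gt0 // -addn4 natrD.
  by set S := _%:R; nra.
have [M0' C0] : 0 <= M /\ 0 <= C by split; lra.
have dM0 : 0 <= d%:R * M by rewrite mulr_ge0 ?ler0n.
set K := 4 * d%:R * M * C; have K0 : 0 <= K by rewrite /K !mulr_ge0 ?ler0n.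
set F := (s.+1)`!%:R * (K + C).
have lnC0 : 0 <= ln C by rewrite ln_ge0.
have F0 : 0 <= F by rewrite mulr_ge0 ?addr_ge0 ?ler0n.
have V0' : 0 <= 16 * (d%:R * M) * V1 / eps.
  by rewrite !mulr_ge0 ?invr_ge0 ?ler0n // ltW.
have X0 : 0 <= 1 + a + (1 + ln C) + F + 16 * (d%:R * M) * V1 / eps by lra.
move: (archi_boundP X0); set T := Num.Def.archi_bound _; set t := T%:R => Xt.
exists t, (T ^ s.+2)%N => L.
have [t1 ta tC tF teps] : [/\ 1 <= t, a + 1 <= t, 1 + ln C <= t, F <= t
                          & 16 * (d%:R * M) * V1 / eps < t] by split; lra.
have NE : (T ^ s.+2)%:R = t ^+ s.+2 :> R by rewrite natrX.
have t_pow k : 1 <= t ^+ k by rewrite exprn_ege1.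
have L0 : 0 <= L by rewrite /L NE addr_ge0 // mulr_ge0 ?exprn_ge0 //; lra.
have Lt : L <= t ^+ s.+4.
  rewrite /L NE -exprSr (exprS t s.+3).
  by have := t_pow s.+3; set u := t ^+ s.+3; nra.
have Lb := powR_le_exprn beta0 t1 L0 Lt s_beta.
have Lb0 : 0 <= L `^ beta := powR_ge0 _ _.
have ts := t_pow s.
have exp_ge : (K + C) * t ^+ s <= expR t by apply: mul_exprn_le_expR => //; lra.
split.
- by have := ler_wpM2l K0 (t_pow s); have := ler_wpM2l C0 (t_pow s); nra.
- by have := ler_wpM2l K0 Lb; nra.
rewrite NE !exprS.
have P : L `^ beta * (1 + ln C + t) <= t ^+ s * (2 * t).
  by apply: ler_pM => //; lra.
have := ler_wpM2l (mulr_ge0 dM0 V0) P.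
have tpos : 0 < t * t ^+ s by rewrite mulr_gt0 //; lra.
move: teps; rewrite ltr_pdivrMr // -(ltr_pM2r tpos).
move: (d%:R : R) dM0 => dd _; lra.
Qed.

End Horizon.

Lemma first_crossing (R : realType) (u : nat -> R) (n0 : nat) (T : R) :
  u n @[n --> \oo] --> +oo -> u n0 < T ->
  exists m, (n0 < m)%N /\ u m.-1 < T <= u m.
Proof.
move=> /cvgryPge /(_ T) [N _ uN] un0.
have exP : exists m, (n0 < m)%N && (T <= u m).
  by exists (maxn N n0.+1); rewrite leq_maxr /=; apply: uN; exact: leq_maxl.
case: (ex_minnP exP) => m /andP[n0m Tm] m_min; exists m; split => //.
rewrite Tm andbT; have [<-|n0m1] := eqVneq n0 m.-1; first by [].
rewrite ltNge; apply/negP => Tm1.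
have := m_min m.-1; rewrite Tm1 andbT ltn_neqAle n0m1 -ltnS.
rewrite prednK ?(leq_ltn_trans _ n0m) //.
by move=> /(_ isT); rewrite leqNgt ltn_predL (leq_ltn_trans (leq0n _) n0m).
Qed.

Lemma powR_le_powR (R : realType) (x L alpha beta : R) :
  1 <= x -> x <= L -> alpha <= beta -> 0 <= beta -> x `^ alpha <= L `^ beta.
Proof.
move=> x1 xL ab b0; apply: le_trans (ler_powR x1 ab) _.
by apply: ge0_ler_powR; rewrite ?nnegrE //; lra.
Qed.

Section Convergence.
Variables (R : realType) (d : nat) (phi : nat -> 'cV[R]_d).
Variables (C M alpha : R) (n0 : nat).
Local Notation r := (rseq phi).
Hypothesis r_oo : r n @[n --> \oo] --> +oo.
Hypothesis r_ratio : forall n, (1 <= n)%N -> r n <= C * r n.-1.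
Hypothesis alpha_lt1 : alpha < 1.
Hypothesis M_gt0 : 0 < M.
Hypothesis cond_bound : forall n, (n0 <= n)%N ->
  Smat phi n \in unitmx /\ cond (Smat phi n) <= M * ln (r n) `^ alpha.

Lemma ratio_ge1 : 1 <= C.
Proof.
have := r_ratio (leqnn 1); rewrite /= rseq0 mulr1; apply: le_trans.
exact: rseq_ge1.
Qed.

Lemma rseq_lt_crossing m T : (1 <= m)%N -> r m.-1 < T -> r m < C * T.
Proof.
move=> m1 rT; apply: le_lt_trans (r_ratio m1) _.
by rewrite ltr_pM2l // (lt_le_trans ltr01 ratio_ge1).
Qed.

Lemma ln_rseq_le_crossing m T : (1 <= m)%N -> r m.-1 < T ->
  ln (r m) <= ln C + ln T.
Proof.
move=> m1 rT; have T_gt0 := lt_trans (rseq_gt0 phi _) rT.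
have C_gt0 := lt_le_trans ltr01 ratio_ge1.
rewrite -lnM ?posrE // ler_ln ?posrE ?rseq_gt0 ?mulr_gt0 //.
by rewrite le_eqVlt rseq_lt_crossing ?orbT.
Qed.

Lemma crossing_times (R0 K : R) : r n0 < R0 -> C <= K ->
  exists2 mk : nat -> nat,
    forall k, (n0 < mk k)%N /\ r (mk k).-1 < R0 * K ^+ k <= r (mk k)
    & forall k, (mk k < mk k.+1)%N.
Proof.
move=> R0_gt CK; have R0_gt0 := lt_trans (rseq_gt0 phi n0) R0_gt.
have K1 := le_trans ratio_ge1 CK.
have thr_ge k : R0 <= R0 * K ^+ k by rewrite ler_peMr ?exprn_ege1 // ltW.
have /choice [mk mkP] :
    forall k, exists m, (n0 < m)%N /\ r m.-1 < R0 * K ^+ k <= r m.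
  by move=> k; apply: first_crossing r_oo _; exact: lt_le_trans R0_gt (thr_ge k).
exists mk => // k; rewrite ltnNge; apply/negP => /(rseq_le phi) le_r.
have [n0m /andP[lo _]] := mkP k; have [_ /andP[_ hi]] := mkP k.+1.
have := rseq_lt_crossing (leq_ltn_trans (leq0n _) n0m) lo.
have := ler_wpM2r (le_trans (ltW R0_gt0) (thr_ge k)) CK.
by rewrite exprS mulrCA in hi; lra.
Qed.

Lemma lyap_le_block x0 m n (T0 K B : R) :
  (1 <= m)%N -> (n0 <= n)%N -> 2 <= T0 -> C <= K -> 4 * d%:R * B * C <= K ->
  M * ln (r n) `^ alpha <= B -> r m.-1 < T0 <= r m -> r n.-1 < K * T0 <= r n ->
  lyap phi x0 m.+1
  <= 8 * d%:R * B * (1 + ln C + ln K) * dissipation phi x0 m.+1 n.+1.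
Proof.
move=> m1 n0n T0_2 CK BCK condB /andP[rm1 rm] /andP[rn1 rn].
have C1 := ratio_ge1; have T0_gt0 : 0 < T0 by lra.
have rm_lt := rseq_lt_crossing m1 rm1.
have KT0 : C * T0 <= K * T0 by rewrite ler_pM2r.
have mn : (m < n)%N.
  rewrite ltnNge; apply/negP => /(rseq_le phi) rnm.
  by have := lt_le_trans (le_lt_trans rnm rm_lt) (le_trans KT0 rn); rewrite ltxx.
have [S_unit condS] := cond_bound n0n.
have k_le : cond (Smat phi n) <= B := le_trans condS condB.
have k_ge0 := cond_ge0 (Smat phi n).
have rm_pos := rseq_gt0 phi m.
have lg_ge0 : 0 <= ln (r n) - ln (r m).
  by rewrite subr_ge0 ler_ln ?posrE ?rseq_gt0 // rseq_le // ltnW.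
have lg_le : ln (r n) - ln (r m) <= ln C + ln K.
  have lnT0 : ln T0 <= ln (r m) by rewrite ler_ln ?posrE.
  have := ln_rseq_le_crossing (leq_trans m1 (ltnW mn)) rn1.
  have K_gt0 : 0 < K by lra.
  by rewrite lnM ?posrE //; lra.
have r2 : 2 <= r n by have := ler_wpM2r (ltW T0_gt0) (le_trans C1 CK); lra.
have small : 4 * d%:R * cond (Smat phi n) * r m <= r n.
  have dd_ge0 : 0 <= (4 * d%:R : R) by rewrite mulr_ge0 ?ler0n.
  have B_ge0 : 0 <= 4 * d%:R * B by rewrite mulr_ge0 // (le_trans k_ge0).
  apply: le_trans (_ : 4 * d%:R * B * (C * T0) <= _).
    apply: le_trans (_ : 4 * d%:R * B * r m <= _).
      by rewrite ler_pM2r //; apply: ler_wpM2l.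
    exact: ler_wpM2l (ltW rm_lt).
  rewrite mulrA; apply: le_trans rn; apply: ler_wpM2r => //; exact: ltW.
have mrange : (1 <= m < n)%N by rewrite m1 mn.
apply: le_trans (lyap_le_dissipation x0 mrange S_unit r2 small) _.
apply: ler_wpM2r; first exact: dissipation_ge0.
have d8_ge0 : 0 <= (8 * d%:R : R) by rewrite mulr_ge0 ?ler0n.
apply: ler_pM; [exact: mulr_ge0 | lra | | lra].
by apply: ler_wpM2l.
Qed.

(* Cut time at the first crossings mk k of the levels R0 K^k, K = expR t.
   On each of the first N blocks, lyap_le_block turns eps < lyap into a lower
   bound on the dissipation, and the dissipations add up to at most lyap 1. *)
Lemma lyap_blocks_bound x0 eps (R0 t L beta : R) (N : nat) :
  (forall n, (1 <= n)%N -> eps < lyap phi x0 n) ->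
  r n0 < R0 -> expR 1 <= R0 -> alpha <= beta -> 0 <= beta ->
  ln (C * R0) + N%:R * t <= L -> C <= expR t ->
  4 * d%:R * M * C * L `^ beta <= expR t ->
  N%:R * eps <= 8 * d%:R * (M * L `^ beta) * (1 + ln C + t) * lyap phi x0 1.
Proof.
move=> V_gt R0_gt R0_e alpha_beta beta0 L_ge CK BK.
have C1 := ratio_ge1.
have R0_2 : 2 <= R0 by apply: le_trans R0_e; have := expR_ge1Dx (1 : R); lra.
set K := expR t in CK BK; set B := M * L `^ beta.
set G := 8 * d%:R * B * (1 + ln C + t).
have lnK : ln K = t by rewrite expRK.
have K1 : 1 <= K by lra.
have t0 : 0 <= t by rewrite -lnK ln_ge0.
pose thr k := R0 * K ^+ k.
have thr_ge k : R0 <= thr k by rewrite /thr ler_peMr ?exprn_ege1 //; lra.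
have [mk mkP mk_incr] := crossing_times R0_gt CK.
have mk1 k : (1 <= mk k)%N.
  by have [n0m _] := mkP k; exact: leq_ltn_trans (leq0n _) n0m.
have cond_B k : (k < N)%N -> M * ln (r (mk k.+1)) `^ alpha <= B.
  move=> kN; have [_ /andP[lo hi]] := mkP k.+1.
  rewrite ler_pM2l //; apply: powR_le_powR => //.
    rewrite -[1](expRK 1) ler_ln ?posrE ?expR_gt0 ?rseq_gt0 //.
    by have := thr_ge k.+1; rewrite /thr; lra.
  apply: le_trans (ln_rseq_le_crossing (mk1 _) lo) (le_trans _ L_ge).
  rewrite /thr lnM ?posrE ?exprn_gt0 ?lnXn ?lnK; try lra.
  by rewrite addrA (lnM (x := C)) ?posrE ?lerD2l ?mulr_natl ?ler_wpMn2l //; lra.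
have block k : (k < N)%N -> eps <= G * dissipation phi x0 (mk k).+1 (mk k.+1).+1.
  move=> kN; have [n0m crossk] := mkP k; have [n0m' crossk1] := mkP k.+1.
  rewrite exprS mulrCA in crossk1.
  have BCK : 4 * d%:R * B * C <= K by move: BK; rewrite /B; congr (_ <= _); ring.
  have := lyap_le_block x0 (mk1 k) (ltnW n0m') (le_trans R0_2 (thr_ge k)) CK BCK
    (cond_B k kN) crossk crossk1.
  by rewrite lnK; apply: le_trans; exact: ltW (V_gt _ _).
have G_ge0 : 0 <= G.
  have lnC0 : 0 <= ln C by rewrite ln_ge0.
  by rewrite /G /B !mulr_ge0 ?ler0n ?powR_ge0 ?ltW //; lra.
have : \sum_(k < N) eps
       <= \sum_(k < N) G * dissipation phi x0 (mk k).+1 (mk k.+1).+1.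
  by apply: ler_sum => k _; exact: block.
rewrite sumr_const card_ord -mulr_sumr mulr_natl => /le_trans; apply.
rewrite -subr_ge0 -mulrBr mulr_ge0 // subr_ge0.
have := @dissipation_blocks_le _ _ phi x0 mk N (fun k _ => mk_incr k).
by move/le_trans; apply; exact: lyap_le.
Qed.

Lemma lyap_eventually_le x0 eps : 0 < eps ->
  exists n, (1 <= n)%N /\ lyap phi x0 n <= eps.
Proof.
move=> eps0; apply: contrapT => never.
have V_gt n : (1 <= n)%N -> eps < lyap phi x0 n.
  by move=> n1; rewrite ltNge; apply/negP => Vn; apply: never; exists n.
pose beta := Num.max alpha 0.
have [beta0 beta1 alpha_beta] : [/\ 0 <= beta, beta < 1 & alpha <= beta].
  by rewrite /beta le_max lexx orbT gt_max alpha_lt1 ltr01 le_max lexx.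
pose R0 := r n0 + expR 1.
have R0_gt : r n0 < R0 by rewrite /R0 ltrDl expR_gt0.
have R0_e : expR 1 <= R0.
  by rewrite /R0 lerDr ltW ?(lt_le_trans ltr01 (rseq_ge1 _ _)).
have a0 : 0 <= ln (C * R0).
  have R0_1 : 1 <= R0 by have := rseq_ge1 phi n0; have := expR_gt0 (1 : R); lra.
  by rewrite ln_ge0 // mulr_ege1 ?ratio_ge1.
have [t [N [CK BK Nbig]]] := horizon_exists d M_gt0 ratio_ge1 a0
  (lyap_ge0 phi x0 1) eps0 (introT andP (conj beta0 beta1)).
have := lyap_blocks_bound V_gt R0_gt R0_e alpha_beta beta0 (lexx _) CK BK.
by rewrite !mulrA; lra.
Qed.

End Convergence.

Lemma normr_Phi_entry_le (R : realType) (d : nat) (phi : nat -> 'cV[R]_d) n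
    (i j : 'I_d) :
  `|Phi phi n 0 i j| <= Num.sqrt (lyap phi (delta_mx j 0) n).
Proof.
have -> : Phi phi n 0 i j = dot (delta_mx i 0) (traj phi (delta_mx j 0) n).
  by rewrite dot_delta /Phi subn0 /traj -colE mxE.
by apply: le_trans (normr_dot_le _ _) _; rewrite enorm_delta mul1r enormE.
Qed.

Theorem mainTheorem5 (R : realType) (d : nat) (phi : nat -> 'cV[R]_d)
  (alpha : R) :
  rseq phi n @[n --> \oo] --> +oo ->
  (exists C : R, forall n : nat, (1 <= n)%N -> rseq phi n <= C * rseq phi n.-1) ->
  alpha < 1 ->
  (exists (M : R) (n0 : nat), 0 < M /\
     forall n : nat, (n0 <= n)%N ->
       Smat phi n \in unitmx /\
       cond (Smat phi n) <= M * (ln (rseq phi n)) `^ alpha) ->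
  Phi phi n 0 @[n --> \oo] --> (0 : 'M[R]_d).
Proof.
move=> r_oo [C r_ratio] alpha_lt1 [M [n0 [M_gt0 cond_bound]]].
apply/cvgr0Pnorm_le => e e_gt0.
have /choice [N NP] : forall j : 'I_d, exists N,
    forall n, (N <= n)%N -> lyap phi (delta_mx j 0) n <= e ^+ 2.
  move=> j; have [N [N1 VN]] := lyap_eventually_le r_oo r_ratio alpha_lt1 M_gt0
    cond_bound (delta_mx j 0) (exprn_gt0 2 e_gt0).
  by exists N => n Nn; apply: le_trans VN; apply: lyap_le; rewrite N1.
exists (\max_(j < d) N j) => // n /= Nn.
have -> : `|Phi phi n 0| = mx_norm (Phi phi n 0) by [].
rewrite mx_normrE; apply: bigmax_le => [|[i j] _ /=]; first exact: ltW.
apply: le_trans (normr_Phi_entry_le _ _ _ _) _.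
rewrite -(ger0_norm (ltW e_gt0)) -sqrtr_sqr ler_wsqrtr // NP //.
exact: leq_trans (leq_bigmax j) Nn.
Qed.
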